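(* Let $S\in\mathbb{S}^d_m$ and $G\in\mathcal{M}(S)$. If $x\in G$ and $y\in Q_G(x)$, then $P_G(x)\subset P_G(y)$.
   Context: $\mathbb{S}^d_m$: symmetric invertible $d\times d$ real matrices with exactly $m$ positive eigenvalues; $S(x,y):=\langle x,Sy\rangle$. $G\subset\mathbb{R}^d$ is $S$-monotone if $S(x-y,x-y)\ge0$ for $x,y\in G$; maximal if not a strict subset of another $S$-monotone set; $\mathcal{M}(S)$ is the family of maximal $S$-monotone sets. $\psi_G(y):=\sup_{x\in G}(S(x,y)-\frac12S(x,x))$ and $P_G(y):=\operatorname{argmax}_{x\in G}(S(x,y)-\frac12S(x,x))$. $P_G^{-1}(x):=\{y:x\in P_G(y)\}$. For $x\in G$, $Q_G(x)$ is the largest closed convex subset of $P_G^{-1}(x)$ whose relative interior contains $x$; equivalently, $y\in Q_G(x)$ iff there exist $z\in P_G^{-1}(x)$ and $t\in(0,1)$ with $x=ty+(1-t)z$. *)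

From HB Require Import structures.
From mathcomp Require Import all_boot all_order all_algebra.
From mathcomp Require Import boolp classical_sets reals.
Set Implicit Arguments. Unset Strict Implicit. Unset Printing Implicit Defensive.
Import Order.TTheory GRing.Theory Num.Theory.
Local Open Scope ring_scope.
Local Open Scope classical_set_scope.

Section Defs.
Variables (R : realType) (d : nat).

Definition Sform (S : 'M[R]_d) (x y : 'cV[R]_d) : R := (x^T *m S *m y) 0 0.

(* S \in S^d_m : symmetric, invertible, exactly m positive eigenvalues
   (counted with multiplicity: the characteristic polynomial splits over R
   as prod (X - a) over a sequence s of eigenvalues with m positive entries). *)
Definition in_Sdm (m : nat) (S : 'M[R]_d) : Prop :=
  S^T = S /\ S \in unitmx /\
  exists s : seq R,
    char_poly S = \prod_(a <- s) ('X - a%:P) /\ count (fun a => 0 < a) s = m.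

Definition S_monotone (S : 'M[R]_d) (G : set 'cV[R]_d) : Prop :=
  forall x y, G x -> G y -> 0 <= Sform S (x - y) (x - y).

Definition maximal_S_monotone (S : 'M[R]_d) (G : set 'cV[R]_d) : Prop :=
  S_monotone S G /\
  forall G' : set 'cV[R]_d, S_monotone S G' -> G `<=` G' -> G' = G.

Definition phiS (S : 'M[R]_d) (x y : 'cV[R]_d) : R :=
  Sform S x y - 2^-1 * Sform S x x.

Definition P_G (S : 'M[R]_d) (G : set 'cV[R]_d) (y : 'cV[R]_d) : set 'cV[R]_d :=
  [set x | G x /\ forall x', G x' -> phiS S x' y <= phiS S x y].

Definition P_G_inv (S : 'M[R]_d) (G : set 'cV[R]_d) (x : 'cV[R]_d) : set 'cV[R]_d :=
  [set y | P_G S G y x].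

Definition Q_G (S : 'M[R]_d) (G : set 'cV[R]_d) (x : 'cV[R]_d) : set 'cV[R]_d :=
  [set y | P_G_inv S G x y /\
     exists z t, P_G_inv S G x z /\ 0 < t < 1 /\ x = t *: y + (1 - t) *: z].

End Defs.

(* The objective phiS S w v is affine in v.  If x maximizes it on G both at y
   and at z, and w maximizes it at a point strictly between y and z, then w
   does at least as well as x there but no better than x at z, so by affinity
   it does at least as well as x at y, where x is optimal.  For y in Q_G(x) the
   point x itself lies strictly between y and a second point z of P_G^{-1}(x). *)
From HB Require Import structures.
From mathcomp Require Import all_boot all_order all_algebra.
From mathcomp Require Import boolp classical_sets reals.
From mathcomp Require Import ring lra.
Import Order.TTheory GRing.Theory Num.Theory.
Local Open Scope ring_scope.
Local Open Scope classical_set_scope.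

Set Implicit Arguments.

Section ArgmaxConvex.
Variables (R : realType) (d : nat) (S : 'M[R]_d) (G : set 'cV[R]_d).

Lemma Sform_linear (u v w : 'cV[R]_d) (a b : R) :
  Sform S u (a *: v + b *: w) = a * Sform S u v + b * Sform S u w.
Proof. by rewrite /Sform mulmxDr -!scalemxAr !mxE. Qed.

Lemma phiS_affine (u y z : 'cV[R]_d) (t : R) :
  phiS S u (t *: y + (1 - t) *: z) = t * phiS S u y + (1 - t) * phiS S u z.
Proof. rewrite /phiS Sform_linear; ring. Qed.

Lemma P_G_convex_sub (x y z : 'cV[R]_d) (t : R) :
  0 < t < 1 -> P_G S G y x -> P_G S G z x ->
  P_G S G (t *: y + (1 - t) *: z) `<=` P_G S G y.
Proof.
move=> /andP[t_gt0 t_lt1] [Gx xmax_y] [_ xmax_z] w [Gw wmax].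
split=> // x' Gx'.
have gain_y : 0 <= phiS S w y - phiS S x y.
  have := wmax x Gx; rewrite !phiS_affine => gain.
  have loss_z := xmax_z w Gw.
  rewrite -(pmulr_rge0 _ t_gt0); nra.
by have := xmax_y x' Gx'; lra.
Qed.

End ArgmaxConvex.

Theorem lemma2 (R : realType) (d m : nat) (S : 'M[R]_d) (G : set 'cV[R]_d)
  (x y : 'cV[R]_d) :
  in_Sdm m S -> maximal_S_monotone S G ->
  G x -> Q_G S G x y ->
  P_G S G x `<=` P_G S G y.
Proof.
move=> _ _ _ [x_at_y [z [t [x_at_z [t01 ->]]]]].
exact: P_G_convex_sub t01 x_at_y x_at_z.
Qed.
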